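(* Consider any sequences evolved by Algorithm 1, with $\gamma_k,\Gamma_k,\beta_k$ as in the context. For $k\ge0$ and $x\in\mathcal H$ put $\tilde x:=\frac{a_{k+1}}{A_{k+1}}x+\frac{A_k}{A_{k+1}}y^k$, $z^k:=\frac{a_{k+1}}{A_{k+1}}x^k+\frac{A_k}{A_{k+1}}y^k$ and $\Delta_k:=\frac{(1+\mu A_k)A_{k+1}}{2a_{k+1}^2}\|\tilde x-z^k\|^2+\frac{\mu A_k}{2a_{k+1}}\|\tilde x-y^k\|^2$. Then for all $k\ge0$ and $x\in\mathcal H$: (a) $a_{k+1}\gamma_{k+1}(x)+A_k\gamma_{k+1}(y^k)=A_{k+1}\gamma_{k+1}(\tilde x)+\frac{\mu a_{k+1}A_k}{2A_{k+1}}\|x-y^k\|^2$; (b) $A_kh(y^k)+A_{k+1}\Gamma_{k+1}(x)+\frac12\|x-x^0\|^2\ge\beta_k+A_{k+1}[\gamma_{k+1}(\tilde x)+\Delta_k]$; (c) $\Delta_k=\frac{1}{2\lambda_{k+1}}\Big[\|\tilde x-\tilde x^k\|^2+\frac{\mu(1+\mu A_k)\lambda_{k+1}^2A_k}{a_{k+1}A_{k+1}}\|x^k-y^k\|^2\Big]$; (d) $A_kh(y^k)+A_{k+1}\Gamma_{k+1}(x)+\frac12\|x-x^0\|^2\ge\beta_k+A_{k+1}h(y^{k+1})+\frac{1-\sigma^2}{2}\cdot\frac{A_{k+1}}{\lambda_{k+1}}\|y^{k+1}-\tilde x^k\|^2+\frac{\mu(1+\mu A_k)\lambda_{k+1}A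_k}{2a_{k+1}}\|x^k-y^k\|^2$.
   Context: Setting: $\mathcal H$ is a finite-dimensional real inner product space with inner product $\langle\cdot,\cdot\rangle$ and norm $\|\cdot\|$. $f,g:\mathcal H\to(-\infty,\infty]$ are proper, closed, convex functions, $h:=f+g$ has nonempty domain, and $g$ is $\mu$-strongly convex for some $\mu>0$, i.e. $g(tx+(1-t)y)\le tg(x)+(1-t)g(y)-\frac{\mu}{2}t(1-t)\|x-y\|^2$ for all $x,y\in\mathcal H$, $t\in[0,1]$. $x^*$ denotes the unique minimizer of $h$. For $\varepsilon\ge 0$, $\partial_\varepsilon f(y):=\{u\in\mathcal H: f(w)\ge f(y)+\langle u,w-y\rangle-\varepsilon\ \forall w\in\mathcal H\}$, and $\partial g:=\partial_0 g$. Algorithm 1: Choose $x^0,y^0\in\mathcal H$ and $\sigma\in[0,1]$, and set $A_0=0$. For $k=0,1,2,\dots$: choose $\lambda_{k+1}>0$, set $a_{k+1}=\frac{(1+2\mu A_k)\lambda_{k+1}+\sqrt{(1+2\mu A_k)^2\lambda_{k+1}^2+4(1+\mu A_k)A_k\lambda_{k+1}}}{2}$ and $\tilde x^k=\frac{a_{k+1}-\mu A_k\lambda_{k+1}}{A_k+a_{k+1}}x^k+\frac{A_k+\mu A_k\lambda_{k+1}}{A_k+a_{k+1}}y^k$; compute $(y^{k+1},v^{k+1},\varepsilon_{k+1})\in\mathcal H\times\mathcal H\times[0,\infty)$ such that $v^{k+1}\in\partial_{\varepsilon_{k+1}}f(y^{k+1})+\partial g(y^{k+1})$ and $\frac{\|\lambda_{k+1}v^{k+1}+y^{k+1}-\tilde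 x^k\|^2}{1+\lambda_{k+1}\mu}+2\lambda_{k+1}\varepsilon_{k+1}\le\sigma^2\|y^{k+1}-\tilde x^k\|^2$; then set $A_{k+1}=A_k+a_{k+1}$ and $x^{k+1}=\frac{1+\mu A_k}{1+\mu A_{k+1}}x^k+\frac{\mu a_{k+1}}{1+\mu A_{k+1}}y^{k+1}-\frac{a_{k+1}}{1+\mu A_{k+1}}v^{k+1}$. ''Sequences evolved by Algorithm 1'' means any sequences satisfying all these relations for every $k\ge 0$. Auxiliary functions: for $k\ge1$ and $x\in\mathcal H$, $\gamma_k(x):=h(y^k)+\langle v^k,x-y^k\rangle-\varepsilon_k+\frac{\mu}{2}\|x-y^k\|^2$; $\Gamma_0\equiv 0$ and, for $k\ge1$, $\Gamma_k(x):=\sum_{j=1}^k\frac{a_j}{A_k}\gamma_j(x)$ (so $A_k\Gamma_k=\sum_{j=1}^k a_j\gamma_j$). For $k\ge0$, $\beta_k:=\inf_{x\in\mathcal H}\{A_k\Gamma_k(x)+\frac12\|x-x^0\|^2\}$ (so $\beta_0=0$). *)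

(* Convention: the Hilbert space H is a finite-
   dimensional vector space V : vectType R over R : realType, equipped with an
   explicit inner product ip (see is_inner_product). *)
From HB Require Import structures.
From mathcomp Require Import all_boot all_order all_algebra.
From mathcomp Require Import all_classical all_reals all_analysis.
Set Implicit Arguments. Unset Strict Implicit. Unset Printing Implicit Defensive.
Import Order.TTheory GRing.Theory Num.Theory.
Import numFieldNormedType.Exports.
Local Open Scope ring_scope.
Local Open Scope classical_set_scope.

Section Defs.
Variables (R : realType) (V : vectType R) (ip : V -> V -> R).

Definition is_inner_product :=
  [/\ forall x y, ip x y = ip y x,
      forall (c : R) x y z, ip (c *: x + y) z = c * ip x z + ip y z &
      forall x, x != 0 -> 0 < ip x x].

Definition nrm (x : V) : R := Num.sqrt (ip x x).

Definition proper_fun (f : V -> \bar R) :=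
  (forall x, f x != -oo%E) /\ (exists x, (f x < +oo)%E).

(* closed = lower semicontinuous (sequentially, w.r.t. the norm topology) *)
Definition closed_fun (f : V -> \bar R) :=
  forall (x : V) (u : nat -> V),
    (fun n => nrm (u n - x)) @ \oo --> (0 : R) ->
    (f x <= limn_einf (fun n => f (u n)))%E.

(* modulus-m convexity: m = 0 is convexity, m = mu > 0 is mu-strong convexity *)
Definition convex_mod (m : R) (f : V -> \bar R) :=
  forall (x y : V) (t : R), 0 <= t <= 1 ->
    (f (t *: x + (1 - t) *: y)%R <=
       t%:E * f x + (1 - t)%:E * f y - (m / 2 * t * (1 - t) * nrm (x - y) ^+ 2)%:E)%E.

Definition esubdiff (f : V -> \bar R) (e : R) (y u : V) :=
  forall w, (f y + (ip u (w - y) - e)%:E <= f w)%E.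

(* Sequences evolved by Algorithm 1 (lam k.+1 = lambda_{k+1}, a k.+1 = a_{k+1},
   eps k.+1 = eps_{k+1}, xt k = tilde x^k). *)
Definition alg1 (mu : R) (f g : V -> \bar R) (sigma : R)
  (x y v xt : nat -> V) (eps lam a A : nat -> R) :=
  0 <= sigma <= 1 /\ A 0 = 0 /\
  forall k : nat,
    0 < lam k.+1 /\
    a k.+1 = ((1 + 2 * mu * A k) * lam k.+1
              + Num.sqrt ((1 + 2 * mu * A k) ^+ 2 * lam k.+1 ^+ 2
                          + 4 * (1 + mu * A k) * A k * lam k.+1)) / 2 /\
    xt k = ((a k.+1 - mu * A k * lam k.+1) / (A k + a k.+1)) *: x k
           + ((A k + mu * A k * lam k.+1) / (A k + a k.+1)) *: y k /\
    0 <= eps k.+1 /\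
    (exists u w : V, v k.+1 = u + w /\ esubdiff f (eps k.+1) (y k.+1) u
                     /\ esubdiff g 0 (y k.+1) w) /\
    nrm (lam k.+1 *: v k.+1 + y k.+1 - xt k) ^+ 2 / (1 + lam k.+1 * mu)
      + 2 * lam k.+1 * eps k.+1 <= sigma ^+ 2 * nrm (y k.+1 - xt k) ^+ 2 /\
    A k.+1 = A k + a k.+1 /\
    x k.+1 = ((1 + mu * A k) / (1 + mu * A k.+1)) *: x k
             + (mu * a k.+1 / (1 + mu * A k.+1)) *: y k.+1
             - (a k.+1 / (1 + mu * A k.+1)) *: v k.+1.

Definition gamma (mu : R) (f g : V -> \bar R) (y v : nat -> V) (eps : nat -> R)
  (k : nat) (x : V) : \bar R :=
  (f (y k) + g (y k)
   + (ip (v k) (x - y k) - eps k + mu / 2 * nrm (x - y k) ^+ 2)%:E)%E.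

Definition Gamma (mu : R) (f g : V -> \bar R) (y v : nat -> V) (eps a A : nat -> R)
  (k : nat) (x : V) : \bar R :=
  if k is 0 then 0%E
  else (\sum_(1 <= j < k.+1) (a j / A k)%:E * gamma mu f g y v eps j x)%E.

Definition beta (mu : R) (f g : V -> \bar R) (x y v : nat -> V) (eps a A : nat -> R)
  (k : nat) : \bar R :=
  ereal_inf (range (fun z : V =>
    ((A k)%:E * Gamma mu f g y v eps a A k z + (1 / 2 * nrm (z - x 0) ^+ 2)%:E)%E)).

End Defs.

From HB Require Import structures.
From mathcomp Require Import all_boot all_order all_algebra.
From mathcomp Require Import all_classical all_reals all_analysis.
From mathcomp Require Import ring lra.
Import Order.TTheory GRing.Theory Num.Theory.
Local Open Scope ring_scope.

(* All four statements reduce to identities and inequalities between real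
   numbers once the extended-valued functions have been shown finite where
   they are evaluated:
   - a proper function is finite wherever it has an e-subgradient, so each
     gamma_{k+1} is a real quadratic model, and strong convexity of g makes
     gamma_{k+1} a global minorant of h = f + g;
   - A_k Gamma_k(w) + 1/2 |w - x^0|^2 is a quadratic in w minimised at x^k with
     curvature (1 + mu A_k)/2 (estimate_quadratic); hence beta_k is its value
     at x^k, and the defining equation of a_{k+1} reads
     lam_{k+1} = a_{k+1}^2 / ((1 + mu A_k) A_{k+1} + mu A_k a_{k+1});
   - (a) and (c) are then polynomial identities in the inner product, (b)
     follows from (a) and the quadratic identity, and (d) from (b), (c) and a
     completion of squares controlled by the relative-error criterion. *)

Lemma ge0_of_perturbation (R : realFieldType) (D c : R) : 0 <= c ->
  (forall t, 0 < t <= 1 -> 0 <= D + c * t) -> 0 <= D.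
Proof.
move=> c0 hD; rewrite leNgt; apply/negP => D0.
have E0 : 0 < - D + 2 * c by lra.
set t := - D / (- D + 2 * c).
have t0 : 0 < t by rewrite /t divr_gt0 // oppr_gt0.
have t1 : t <= 1 by rewrite /t ler_pdivrMr // mul1r; lra.
have := hD t; rewrite t0 t1 => /(_ isT).
have -> : D + c * t = D * (c - D) / (- D + 2 * c) by rewrite /t; field; exact: lt0r_neq0.
by rewrite pmulr_lge0 ?invr_gt0 // pmulr_lge0 ?ltNge ?(ltW D0) //; lra.
Qed.

Section InnerProduct.
Set Implicit Arguments.
Variables (R : realType) (V : vectType R) (ip : V -> V -> R).
Hypothesis ip_inner : is_inner_product ip.

Lemma ipC x y : ip x y = ip y x. Proof. by case: ip_inner. Qed.

Lemma ipDZl c x y z : ip (c *: x + y) z = c * ip x z + ip y z.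
Proof. by case: ip_inner. Qed.

Lemma ip0l z : ip 0 z = 0.
Proof. by have := ipDZl (-1) 0 0 z; rewrite scaler0 addr0 mulN1r addNr. Qed.

Lemma ipDl x y z : ip (x + y) z = ip x z + ip y z.
Proof. by have := ipDZl 1 x y z; rewrite scale1r mul1r. Qed.

Lemma ipZl c x z : ip (c *: x) z = c * ip x z.
Proof. by rewrite -[c *: x]addr0 ipDZl ip0l addr0. Qed.

Lemma ipNl x z : ip (- x) z = - ip x z.
Proof. by rewrite -scaleN1r ipZl mulN1r. Qed.

Lemma ipDr x y z : ip z (x + y) = ip z x + ip z y.
Proof. by rewrite ipC ipDl !(ipC z). Qed.

Lemma ipZr c x z : ip z (c *: x) = c * ip z x.
Proof. by rewrite ipC ipZl ipC. Qed.

Lemma ipNr x z : ip z (- x) = - ip z x.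
Proof. by rewrite ipC ipNl ipC. Qed.

Lemma ip_ge0 x : 0 <= ip x x.
Proof.
have [->|nz] := eqVneq x 0; first by rewrite ip0l.
by case: ip_inner => _ _ /(_ x nz) /ltW.
Qed.

Lemma nrm_sqr x : nrm ip x ^+ 2 = ip x x.
Proof. by rewrite /nrm sqr_sqrtr // ip_ge0. Qed.

Lemma nrm_sqr_ge0 x : 0 <= nrm ip x ^+ 2.
Proof. by rewrite nrm_sqr ip_ge0. Qed.

(* Expand squared norms and inner products of linear combinations into
   inner products of the atoms, so that [ring]/[field] can finish. *)
Ltac ip_expand := rewrite ?nrm_sqr ?(ipDl, ipDr, ipZl, ipZr, ipNl, ipNr).

(* Completion of squares behind (d): if  l w + d  is a relative-error
   approximate proximal residual (with tolerance s and error e), then the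
   linearisation  <w,u> - e + m/2 |u|^2 + |u + d|^2/(2l)  is bounded below by
   (1 - s^2)/(2l) |d|^2, for every u. *)
Lemma relerr_lower_bound (u d w : V) (l m e s : R) : 0 < l -> 0 < m ->
  nrm ip (l *: w + d) ^+ 2 / (1 + l * m) + 2 * l * e <= s ^+ 2 * nrm ip d ^+ 2 ->
  (1 - s ^+ 2) / (2 * l) * nrm ip d ^+ 2
    <= ip w u - e + m / 2 * nrm ip u ^+ 2 + 1 / (2 * l) * nrm ip (u + d) ^+ 2.
Proof.
move=> l0 m0 herr; set c := 1 + l * m.
have c0 : 0 < c by rewrite /c; have := mulr_gt0 l0 m0; lra.
have herr' : nrm ip (l *: w + d) ^+ 2 + 2 * l * c * e <= c * s ^+ 2 * nrm ip d ^+ 2.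
  have := ler_wpM2l (ltW c0) herr.
  have -> : c * (nrm ip (l *: w + d) ^+ 2 / c + 2 * l * e)
    = nrm ip (l *: w + d) ^+ 2 + 2 * l * c * e by field; exact: lt0r_neq0.
  by rewrite mulrA.
set gap := ip w u - e + m / 2 * nrm ip u ^+ 2 + 1 / (2 * l) * nrm ip (u + d) ^+ 2
           - (1 - s ^+ 2) / (2 * l) * nrm ip d ^+ 2.
have gapE : 2 * l * c * gap = nrm ip (c *: u + l *: w + d) ^+ 2
    - nrm ip (l *: w + d) ^+ 2 - 2 * l * c * e + c * s ^+ 2 * nrm ip d ^+ 2.
  rewrite /gap /c; ip_expand; rewrite ?(ipC w u) ?(ipC d u) ?(ipC d w).
  by field; exact: lt0r_neq0.
have : 0 <= 2 * l * c * gap by rewrite gapE; have := nrm_sqr_ge0 (c *: u + l *: w + d); lra.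
by rewrite pmulr_rge0 ?subr_ge0 // !mulr_gt0.
Qed.

Lemma esubdiff_fin (phi : V -> \bar R) e y0 u :
  proper_fun phi -> esubdiff ip phi e y0 u -> phi y0 = (fine (phi y0))%:E.
Proof.
move=> [phi_ninfty [x0 phi_x0]] hsub; case Ey: (phi y0) => [r| |] //=.
- have := hsub x0; rewrite Ey addye // leye_eq => /eqP phiE.
  by move: phi_x0; rewrite phiE ltxx.
- by move: (phi_ninfty y0); rewrite Ey.
Qed.

Lemma strong_subgradient (phi : V -> \bar R) (mu : R) y0 u G :
  proper_fun phi -> 0 <= mu -> convex_mod ip mu phi -> esubdiff ip phi 0 y0 u ->
  phi y0 = G%:E ->
  forall w, ((G + ip u (w - y0) + mu / 2 * nrm ip (w - y0) ^+ 2)%:E <= phi w)%E.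
Proof.
move=> [phi_ninfty _] mu0 hconv hsub Ey w.
case Ew: (phi w) => [W| |]; [|by rewrite leey|by move: (phi_ninfty w); rewrite Ew].
rewrite lee_fin; set N := nrm ip (w - y0) ^+ 2; set I := ip u (w - y0).
suff : 0 <= W - G - I - mu / 2 * N by lra.
apply: (@ge0_of_perturbation _ _ (mu / 2 * N)).
  by rewrite mulr_ge0 ?nrm_sqr_ge0 //; lra.
move=> t /andP [t0 t1]; have t01 : 0 <= t <= 1 by rewrite ltW.
(* the subgradient inequality at the convex combination t w + (1-t) y0 *)
have hseg : t *: w + (1 - t) *: y0 - y0 = t *: (w - y0).
  by rewrite scalerBr scalerBl scale1r addrCA [y0 + _]addrC addrK.
have := le_trans (hsub (t *: w + (1 - t) *: y0)) (hconv w y0 t t01).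
rewrite Ew Ey hseg -!EFinM -!EFinD lee_fin ipZr ?subr0 -/I -/N => hcomb.
have : 0 <= t * (W - G - I - mu / 2 * N + mu / 2 * N * t) by move: hcomb; nra.
by rewrite pmulr_rge0.
Qed.

Section Algorithm1.
Variables (f g : V -> \bar R) (mu sigma : R) (x y v xt : nat -> V)
  (eps lam a A : nat -> R).
Hypotheses (f_proper : proper_fun f) (g_proper : proper_fun g) (mu_gt0 : 0 < mu)
  (g_strong : convex_mod ip mu g)
  (alg : alg1 ip mu f g sigma x y v xt eps lam a A).

Lemma A0 : A 0 = 0. Proof. by case: alg => _ []. Qed.

Lemma lam_gt0 k : 0 < lam k.+1. Proof. by case: alg => _ [_ /(_ k) []]. Qed.

Lemma aE k : a k.+1 = ((1 + 2 * mu * A k) * lam k.+1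
              + Num.sqrt ((1 + 2 * mu * A k) ^+ 2 * lam k.+1 ^+ 2
                          + 4 * (1 + mu * A k) * A k * lam k.+1)) / 2.
Proof. by case: alg => _ [_ /(_ k) [_ []]]. Qed.

Lemma xtE k : xt k = ((a k.+1 - mu * A k * lam k.+1) / (A k + a k.+1)) *: x k
           + ((A k + mu * A k * lam k.+1) / (A k + a k.+1)) *: y k.
Proof. by case: alg => _ [_ /(_ k) [_ [_ []]]]. Qed.

Lemma v_subgrad k : exists u w : V, v k.+1 = u + w /\
  esubdiff ip f (eps k.+1) (y k.+1) u /\ esubdiff ip g 0 (y k.+1) w.
Proof. by case: alg => _ [_ /(_ k) [_ [_ [_ [_ []]]]]]. Qed.

Lemma relerr k :
  nrm ip (lam k.+1 *: v k.+1 + y k.+1 - xt k) ^+ 2 / (1 + lam k.+1 * mu)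
  + 2 * lam k.+1 * eps k.+1 <= sigma ^+ 2 * nrm ip (y k.+1 - xt k) ^+ 2.
Proof. by case: alg => _ [_ /(_ k) [_ [_ [_ [_ [_ []]]]]]]. Qed.

Lemma AS k : A k.+1 = A k + a k.+1.
Proof. by case: alg => _ [_ /(_ k) [_ [_ [_ [_ [_ [_ []]]]]]]]. Qed.

Lemma xS k : x k.+1 = ((1 + mu * A k) / (1 + mu * A k.+1)) *: x k
             + (mu * a k.+1 / (1 + mu * A k.+1)) *: y k.+1
             - (a k.+1 / (1 + mu * A k.+1)) *: v k.+1.
Proof. by case: alg => _ [_ /(_ k) [_ [_ [_ [_ [_ [_ []]]]]]]]. Qed.

Lemma a_gt0_of k : 0 <= A k -> 0 < a k.+1.
Proof.
move=> hA; rewrite aE divr_gt0 // ltr_pwDl ?sqrtr_ge0 // mulr_gt0 ?lam_gt0 //.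
have : 0 <= mu * A k by rewrite mulr_ge0 // ltW.
lra.
Qed.

Lemma A_ge0 k : 0 <= A k.
Proof.
elim: k => [|k IH]; first by rewrite A0.
by rewrite AS; have := @a_gt0_of k IH; lra.
Qed.

Lemma a_gt0 k : 0 < a k.+1. Proof. exact: @a_gt0_of k (A_ge0 k). Qed.

Lemma A_gt0 k : 0 < A k.+1.
Proof. by rewrite AS; have := a_gt0 k; have := A_ge0 k; lra. Qed.

Lemma muA_ge0 k : 0 <= mu * A k.
Proof. by rewrite mulr_ge0 ?(ltW mu_gt0) ?A_ge0. Qed.

Lemma lam_denom_gt0 k : 0 < (1 + mu * A k) * (A k + a k.+1) + mu * A k * a k.+1.
Proof.
have := muA_ge0 k; have := a_gt0 k; have := A_ge0 k => hA ha hmA.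
have : 0 < (1 + mu * A k) * (A k + a k.+1) by rewrite mulr_gt0; lra.
have : 0 <= mu * A k * a k.+1 by rewrite mulr_ge0 // ltW.
lra.
Qed.

(* a_{k+1} is the positive root of the quadratic defining it, i.e.
   lam_{k+1} = a_{k+1}^2 / ((1 + mu A_k) A_{k+1} + mu A_k a_{k+1}). *)
Lemma lamE k : lam k.+1 = a k.+1 ^+ 2 /
   ((1 + mu * A k) * (A k + a k.+1) + mu * A k * a k.+1).
Proof.
set S := (1 + 2 * mu * A k) ^+ 2 * lam k.+1 ^+ 2 + 4 * (1 + mu * A k) * A k * lam k.+1.
have S0 : 0 <= S.
  have := muA_ge0 k; have := lam_gt0 k; have := A_ge0 k => hA hlam hmA.
  by rewrite /S addr_ge0 ?sqr_ge0 // !mulr_ge0 //; lra.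
have sqrtS : Num.sqrt S = 2 * a k.+1 - (1 + 2 * mu * A k) * lam k.+1.
  by rewrite aE; field.
have := sqr_sqrtr S0; rewrite sqrtS /S => hsq.
apply: (mulIf (lt0r_neq0 (lam_denom_gt0 k))); rewrite divfK ?lt0r_neq0 ?lam_denom_gt0 //.
by move: hsq; lra.
Qed.

Definition fval j := fine (f (y j)).
Definition gval j := fine (g (y j)).
Definition gamr j w := fval j + gval j
  + (ip (v j) (w - y j) - eps j + mu / 2 * nrm ip (w - y j) ^+ 2).

(* f and g are finite at y_{k+1}, since they have subgradients there. *)
Lemma f_yE k : f (y k.+1) = (fval k.+1)%:E.
Proof. by have [u [_ [_ [hu _]]]] := v_subgrad k; exact: esubdiff_fin hu. Qed.

Lemma g_yE k : g (y k.+1) = (gval k.+1)%:E.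
Proof. by have [_ [w [_ [_ hw]]]] := v_subgrad k; exact: esubdiff_fin hw. Qed.

Lemma h_yE k : (f (y k.+1) + g (y k.+1))%E = (fval k.+1 + gval k.+1)%:E.
Proof. by rewrite f_yE g_yE. Qed.

Lemma gammaE k w : gamma ip mu f g y v eps k.+1 w = (gamr k.+1 w)%:E.
Proof. by rewrite /gamma f_yE g_yE -!EFinD. Qed.

(* gamma_{k+1} minorises h = f + g: add the eps-subgradient inequality of f
   to the strong-convexity minorant of g. *)
Lemma gamr_le_h k w : ((gamr k.+1 w)%:E <= f w + g w)%E.
Proof.
have [u [u' [vE [hu hu']]]] := v_subgrad k.
have hf := hu w; rewrite f_yE -EFinD in hf.
have hg := strong_subgradient g_proper (ltW mu_gt0) g_strong hu' (g_yE k) w.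
apply: le_trans (leeD hf hg); rewrite -EFinD lee_fin /gamr vE ipDl.
by rewrite le_eqVlt; apply/orP; left; apply/eqP; ring.
Qed.

Definition Qsum k w := \sum_(1 <= j < k.+1) a j * gamr j w.

Lemma QsumS k w : Qsum k.+1 w = Qsum k w + a k.+1 * gamr k.+1 w.
Proof. by rewrite /Qsum big_nat_recr. Qed.

Lemma AGammaE k w : ((A k)%:E * Gamma ip mu f g y v eps a A k w)%E = (Qsum k w)%:E.
Proof.
case: k => [|k]; first by rewrite /= mule0 /Qsum big_geq.
rewrite /Gamma (eq_big_nat _ _ (F2 := fun j => ((a j / A k.+1) * gamr j w)%:E)).
  rewrite sumEFin -EFinM mulr_sumr /Qsum; congr EFin; apply: eq_bigr => j _.
  by field; exact: lt0r_neq0 (A_gt0 k).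
by move=> [|j] //= _; rewrite gammaE -EFinM.
Qed.

(* The estimate function Q_k + 1/2 |. - x^0|^2 is the quadratic with
   curvature (1 + mu A_k)/2 centred at x^k: the update of x^{k+1} is exactly
   the minimiser after adding a_{k+1} gamma_{k+1}. *)
Lemma estimate_quadratic k w : Qsum k w + 1 / 2 * nrm ip (w - x 0) ^+ 2
  = Qsum k (x k) + 1 / 2 * nrm ip (x k - x 0) ^+ 2
    + (1 + mu * A k) / 2 * nrm ip (w - x k) ^+ 2.
Proof.
elim: k w => [|k IH] w.
  by rewrite /Qsum !big_geq // A0 subrr /nrm ip0l sqrtr0; ring.
have den0 : 1 + mu * (A k + a k.+1) != 0.
  by rewrite -AS; have := muA_ge0 k.+1; move=> h; apply: lt0r_neq0; lra.
have -> : Qsum k.+1 w + 1 / 2 * nrm ip (w - x 0) ^+ 2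
  = (Qsum k w + 1 / 2 * nrm ip (w - x 0) ^+ 2) + a k.+1 * gamr k.+1 w.
  by rewrite QsumS; ring.
have -> : Qsum k.+1 (x k.+1) + 1 / 2 * nrm ip (x k.+1 - x 0) ^+ 2
  = (Qsum k (x k.+1) + 1 / 2 * nrm ip (x k.+1 - x 0) ^+ 2)
    + a k.+1 * gamr k.+1 (x k.+1).
  by rewrite QsumS; ring.
rewrite IH [in RHS]IH /gamr xS !AS; ip_expand.
rewrite ?(ipC (x k) w) ?(ipC (y k.+1) w) ?(ipC (v k.+1) w)
        ?(ipC (y k.+1) (x k)) ?(ipC (v k.+1) (x k)) ?(ipC (v k.+1) (y k.+1)).
by field.
Qed.

Lemma betaE k : beta ip mu f g x y v eps a A k
  = (Qsum k (x k) + 1 / 2 * nrm ip (x k - x 0) ^+ 2)%:E.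
Proof.
rewrite /beta.
have -> : (fun z => (A k)%:E * Gamma ip mu f g y v eps a A k z
            + (1 / 2 * nrm ip (z - x 0) ^+ 2)%:E)%E
          = (fun z => (Qsum k z + 1 / 2 * nrm ip (z - x 0) ^+ 2)%:E).
  by apply: funext => z; rewrite AGammaE -EFinD.
apply/eqP; rewrite eq_le; apply/andP; split.
  by apply: ereal_inf_lbound; exists (x k).
apply/ereal_infP => _ [z _ <-]; rewrite lee_fin (estimate_quadratic k z) lerDl.
by rewrite mulr_ge0 ?nrm_sqr_ge0 //; have := muA_ge0 k; lra.
Qed.

Definition xtil k z := (a k.+1 / A k.+1) *: z + (A k / A k.+1) *: y k.
Definition zpt k := (a k.+1 / A k.+1) *: x k + (A k / A k.+1) *: y k.
Definition Delta k z :=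
  (1 + mu * A k) * A k.+1 / (2 * a k.+1 ^+ 2) * nrm ip (xtil k z - zpt k) ^+ 2
  + mu * A k / (2 * a k.+1) * nrm ip (xtil k z - y k) ^+ 2.

Let A_neq0 k : A k + a k.+1 != 0.
Proof. by rewrite -AS lt0r_neq0 ?A_gt0. Qed.

(* (a) in real form: gamma_{k+1} is a quadratic with curvature mu, so its
   convex combination defect is mu a A /(2 A') |z - y_k|^2. *)
Lemma gamr_interp k z : a k.+1 * gamr k.+1 z + A k * gamr k.+1 (y k)
  = A k.+1 * gamr k.+1 (xtil k z)
    + mu * a k.+1 * A k / (2 * A k.+1) * nrm ip (z - y k) ^+ 2.
Proof.
rewrite /gamr /xtil AS; ip_expand.
rewrite ?(ipC (y k) z) ?(ipC (y k.+1) z) ?(ipC (v k.+1) z)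
        ?(ipC (y k.+1) (y k)) ?(ipC (v k.+1) (y k)) ?(ipC (v k.+1) (y k.+1)).
by field; exact: A_neq0.
Qed.

(* A_{k+1} Delta_k splits into the curvature terms of the estimate and of
   gamma_{k+1}. *)
Lemma Delta_scaled k z : A k.+1 * Delta k z
  = (1 + mu * A k) / 2 * nrm ip (z - x k) ^+ 2
    + mu * a k.+1 * A k / (2 * A k.+1) * nrm ip (z - y k) ^+ 2.
Proof.
rewrite /Delta /xtil /zpt AS; ip_expand.
rewrite ?(ipC (x k) z) ?(ipC (y k) z) ?(ipC (y k) (x k)).
by field; rewrite A_neq0 lt0r_neq0 ?a_gt0.
Qed.

Lemma Delta_prox k z : Delta k z = 1 / (2 * lam k.+1) *
  (nrm ip (xtil k z - xt k) ^+ 2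
   + mu * (1 + mu * A k) * lam k.+1 ^+ 2 * A k / (a k.+1 * A k.+1)
     * nrm ip (x k - y k) ^+ 2).
Proof.
rewrite /Delta /xtil /zpt xtE; ip_expand.
rewrite ?(ipC (x k) z) ?(ipC (y k) z) ?(ipC (y k) (x k)) lamE AS.
by field; rewrite A_neq0 !lt0r_neq0 ?a_gt0 ?lam_denom_gt0.
Qed.

Lemma estimate_step k z :
  A k * gamr k.+1 (y k) + Qsum k.+1 z + 1 / 2 * nrm ip (z - x 0) ^+ 2
  = Qsum k (x k) + 1 / 2 * nrm ip (x k - x 0) ^+ 2
    + A k.+1 * (gamr k.+1 (xtil k z) + Delta k z).
Proof.
have := gamr_interp k z; have := estimate_quadratic k z; have := Delta_scaled k z.
by rewrite QsumS; lra.
Qed.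

Lemma gamma_interp k z :
  ((a k.+1)%:E * gamma ip mu f g y v eps k.+1 z
   + (A k)%:E * gamma ip mu f g y v eps k.+1 (y k)
   = (A k.+1)%:E * gamma ip mu f g y v eps k.+1 (xtil k z)
     + (mu * a k.+1 * A k / (2 * A k.+1) * nrm ip (z - y k) ^+ 2)%:E)%E.
Proof. by rewrite !gammaE -!EFinM -!EFinD gamr_interp. Qed.

Lemma lhs_lower k z :
  ((A k * gamr k.+1 (y k) + Qsum k.+1 z + 1 / 2 * nrm ip (z - x 0) ^+ 2)%:E
   <= (A k)%:E * (f (y k) + g (y k))
      + (A k.+1)%:E * Gamma ip mu f g y v eps a A k.+1 z
      + (1 / 2 * nrm ip (z - x 0) ^+ 2)%:E)%E.
Proof.
rewrite AGammaE !EFinD EFinM; apply: leeD2r; apply: leeD2r.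
by apply: lee_wpmul2l; [rewrite lee_fin A_ge0 | exact: gamr_le_h].
Qed.

(* (b): the estimate step, using h >= gamma_{k+1} at y_k. *)
Lemma estimate_lower k z :
  (beta ip mu f g x y v eps a A k
     + (A k.+1)%:E * (gamma ip mu f g y v eps k.+1 (xtil k z) + (Delta k z)%:E)
   <= (A k)%:E * (f (y k) + g (y k))
      + (A k.+1)%:E * Gamma ip mu f g y v eps a A k.+1 z
      + (1 / 2 * nrm ip (z - x 0) ^+ 2)%:E)%E.
Proof. by rewrite betaE gammaE -EFinD -estimate_step lhs_lower. Qed.

(* The relative-error criterion lower-bounds the model gap at xtil:
   A'(gamma(xtil) + Delta) exceeds A' h(y_{k+1}) by the two terms of (d). *)
Lemma model_gap k z :
  A k.+1 * (fval k.+1 + gval k.+1)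
  + ((1 - sigma ^+ 2) / 2 * (A k.+1 / lam k.+1) * nrm ip (y k.+1 - xt k) ^+ 2
     + mu * (1 + mu * A k) * lam k.+1 * A k / (2 * a k.+1) * nrm ip (x k - y k) ^+ 2)
  <= A k.+1 * (gamr k.+1 (xtil k z) + Delta k z).
Proof.
have herr := relerr k; rewrite -addrA in herr.
have := @relerr_lower_bound (xtil k z - y k.+1) _ _ _ _ _ _ (lam_gt0 k) mu_gt0 herr.
rewrite addrA subrK => hlow; rewrite -subr_ge0.
have -> : A k.+1 * (gamr k.+1 (xtil k z) + Delta k z) - (A k.+1 * (fval k.+1 + gval k.+1)
   + ((1 - sigma ^+ 2) / 2 * (A k.+1 / lam k.+1) * nrm ip (y k.+1 - xt k) ^+ 2
      + mu * (1 + mu * A k) * lam k.+1 * A k / (2 * a k.+1) * nrm ip (x k - y k) ^+ 2))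
   = A k.+1 * ((ip (v k.+1) (xtil k z - y k.+1) - eps k.+1
                + mu / 2 * nrm ip (xtil k z - y k.+1) ^+ 2
                + 1 / (2 * lam k.+1) * nrm ip (xtil k z - xt k) ^+ 2)
               - (1 - sigma ^+ 2) / (2 * lam k.+1) * nrm ip (y k.+1 - xt k) ^+ 2).
  rewrite Delta_prox /gamr; field.
  by rewrite !lt0r_neq0 ?lam_gt0 ?a_gt0 ?A_gt0.
by rewrite mulr_ge0 ?subr_ge0 // ltW // A_gt0.
Qed.

Lemma descent k z :
  (beta ip mu f g x y v eps a A k + (A k.+1)%:E * (f (y k.+1) + g (y k.+1))
     + ((1 - sigma ^+ 2) / 2 * (A k.+1 / lam k.+1) * nrm ip (y k.+1 - xt k) ^+ 2
        + mu * (1 + mu * A k) * lam k.+1 * A k / (2 * a k.+1)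
          * nrm ip (x k - y k) ^+ 2)%:E
   <= (A k)%:E * (f (y k) + g (y k))
      + (A k.+1)%:E * Gamma ip mu f g y v eps a A k.+1 z
      + (1 / 2 * nrm ip (z - x 0) ^+ 2)%:E)%E.
Proof.
apply: le_trans (estimate_lower k z).
by rewrite betaE h_yE gammaE -!EFinD lee_fin -addrA lerD2l model_gap.
Qed.

End Algorithm1.

End InnerProduct.

Theorem lemma2p3 (R : realType) (V : vectType R) (ip : V -> V -> R)
  (f g : V -> \bar R) (mu sigma : R)
  (x y v xt : nat -> V) (eps lam a A : nat -> R) :
  is_inner_product ip ->
  proper_fun f -> closed_fun ip f -> convex_mod ip 0 f ->
  proper_fun g -> closed_fun ip g -> 0 < mu -> convex_mod ip mu g ->
  (exists z : V, (f z + g z < +oo)%E) ->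
  alg1 ip mu f g sigma x y v xt eps lam a A ->
  forall (k : nat) (z : V),
    let h := fun w : V => (f w + g w)%E in
    let gam := gamma ip mu f g y v eps in
    let xtil := (a k.+1 / A k.+1) *: z + (A k / A k.+1) *: y k in
    let zk := (a k.+1 / A k.+1) *: x k + (A k / A k.+1) *: y k in
    let Delta := (1 + mu * A k) * A k.+1 / (2 * a k.+1 ^+ 2) * nrm ip (xtil - zk) ^+ 2
                 + mu * A k / (2 * a k.+1) * nrm ip (xtil - y k) ^+ 2 in
    let LHS := ((A k)%:E * h (y k)
                + (A k.+1)%:E * Gamma ip mu f g y v eps a A k.+1 z
                + (1 / 2 * nrm ip (z - x 0) ^+ 2)%:E)%E in
    [/\ ((a k.+1)%:E * gam k.+1 z + (A k)%:E * gam k.+1 (y k)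
         = (A k.+1)%:E * gam k.+1 xtil
           + (mu * a k.+1 * A k / (2 * A k.+1) * nrm ip (z - y k) ^+ 2)%:E)%E,
        (beta ip mu f g x y v eps a A k + (A k.+1)%:E * (gam k.+1 xtil + Delta%:E)
           <= LHS)%E,
        Delta = 1 / (2 * lam k.+1) *
                  (nrm ip (xtil - xt k) ^+ 2
                   + mu * (1 + mu * A k) * lam k.+1 ^+ 2 * A k / (a k.+1 * A k.+1)
                     * nrm ip (x k - y k) ^+ 2) &
        (beta ip mu f g x y v eps a A k + (A k.+1)%:E * h (y k.+1)
           + ((1 - sigma ^+ 2) / 2 * (A k.+1 / lam k.+1) * nrm ip (y k.+1 - xt k) ^+ 2
              + mu * (1 + mu * A k) * lam k.+1 * A k / (2 * a k.+1)
                * nrm ip (x k - y k) ^+ 2)%:E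
           <= LHS)%E].
Proof.
move=> ip_inner f_proper _ _ g_proper _ mu_gt0 g_strong _ alg k z.
split.
- exact (gamma_interp ip_inner f_proper g_proper mu_gt0 alg k z).
- exact (estimate_lower ip_inner f_proper g_proper mu_gt0 g_strong alg k z).
- exact (Delta_prox ip_inner mu_gt0 alg k z).
- exact (descent ip_inner f_proper g_proper mu_gt0 g_strong alg k z).
Qed.
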